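(* Let $X,Y$ be Banach spaces, $T:X\to Y$ a bounded linear operator, $q\ge 2$ and $c>0$. Then $T$ is uniformly $q$-convex with constant $c$ if and only if $T$ has strong martingale cotype $q$ with constant $c$.
   Context: Dyadic setting: for $k=0,1,2,\dots$, $\mathcal F_k$ is the $\sigma$-algebra on $[0,1)$ generated by the dyadic intervals $[i/2^k,(i+1)/2^k)$, $i=0,\dots,2^k-1$ (so $\mathcal F_0$ is trivial), with Lebesgue measure. A sequence $d_0,d_1,\dots,d_n$ of $X$-valued functions on $[0,1)$ is a sequence of differences of a dyadic martingale if each $d_k$ is $\mathcal F_k$-measurable and $\mathbb E(d_k\mid\mathcal F_{k-1})=0$ for $k\ge1$ (so $d_0$ is constant). For $f:[0,1)\to X$, $\|f|L_q\|=(\int_0^1\|f(t)\|^q\,dt)^{1/q}$. $T$ is uniformly $q$-convex with constant $c$ if for all $x_+,x_-\in X$: $\left\|\frac{Tx_+-Tx_-}{2}\right\|\le c\left(\frac{\|x_+\|^q+\|x_-\|^q}{2}-\left\|\frac{x_++x_-}{2}\right\|^q\right)^{1/q}$. $T$ has strong martingale cotype $q$ with constant $c$ if for all $n\in\mathbb N$ and all sequences $d_0,\dots,d_n$ of $X$-valued differences of dyadic martingales with $d_0\equiv x$: $\left(\|x\|^q+c^{-q}\sum_{k=1}^n\|Td_k|L_q\|^q\right)^{1/q}\le\left\|\sum_{k=0}^n d_k\Big|L_q\right\|$. *)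

From HB Require Import structures.
From mathcomp Require Import all_boot all_order all_algebra.
From mathcomp Require Import all_classical all_reals all_analysis.
Set Implicit Arguments. Unset Strict Implicit. Unset Printing Implicit Defensive.
Import Order.TTheory GRing.Theory Num.Theory.
Import numFieldNormedType.Exports.
Local Open Scope classical_set_scope.
Local Open Scope ring_scope.

Definition unit_itv (R : realType) : set R := [set t : R | 0 <= t < 1].

Definition dyadic_itv (R : realType) (k i : nat) : set R :=
  [set t : R | i%:R / 2 ^+ k <= t < i.+1%:R / 2 ^+ k].

(* f : [0,1) -> V is F_k-measurable: F_k is the finite sigma-algebra whose
   atoms are the dyadic intervals of level k, so (the target being Hausdorff)
   measurability means f is constant on each atom. *)
Definition dyadic_measurable (R : realType) (V : Type) (k : nat) (f : R -> V) :=
  forall i : nat, (i < 2 ^ k)%N ->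
    forall s t, @dyadic_itv R k i s -> @dyadic_itv R k i t -> f s = f t.

(* E(f | F_{k-1}) = 0 for an F_k-measurable f (k >= 1): on each atom of
   F_{k-1}, [j/2^(k-1),(j+1)/2^(k-1)), the conditional expectation is the
   average of the values of f on its two halves (the level-k atoms 2j, 2j+1),
   so the condition is that these two values sum to zero. *)
Definition cond_exp_zero (R : realType) (V : zmodType) (k : nat) (f : R -> V) :=
  forall j : nat, (j < 2 ^ k.-1)%N ->
    forall s t, @dyadic_itv R k j.*2 s -> @dyadic_itv R k j.*2.+1 t ->
      f s + f t = 0.

Definition dyadic_mart_diff (R : realType) (V : normedModType R) (n : nat)
    (d : nat -> R -> V) :=
  (forall k, (k <= n)%N -> dyadic_measurable k (d k)) /\
  (forall k, (1 <= k <= n)%N -> cond_exp_zero k (d k)).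

Definition Lq_norm (R : realType) (V : normedModType R) (q : R) (f : R -> V) : R :=
  (fine (\int[@lebesgue_measure R]_(t in @unit_itv R) ((`|f t| `^ q)%:E))) `^ q^-1.

Definition uniformly_q_convex (R : realType) (X Y : normedModType R)
    (T : X -> Y) (q c : R) :=
  forall xp xm : X,
    `|(2^-1 : R) *: (T xp - T xm)| <=
      c * ((`|xp| `^ q + `|xm| `^ q) / 2 - `|(2^-1 : R) *: (xp + xm)| `^ q) `^ q^-1.

Definition strong_martingale_cotype (R : realType) (X Y : normedModType R)
    (T : X -> Y) (q c : R) :=
  forall (n : nat) (x : X) (d : nat -> R -> X),
    dyadic_mart_diff n d ->
    (forall t, @unit_itv R t -> d 0%N t = x) ->
    (`|x| `^ q + c `^ (- q) * \sum_(1 <= k < n.+1) Lq_norm q (T \o d k) `^ q) `^ q^-1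
      <= Lq_norm q (fun t => \sum_(0 <= k < n.+1) d k t).

From Pilot Require Import Defs.
From HB Require Import structures.
From mathcomp Require Import all_boot all_order all_algebra.
From mathcomp Require Import all_classical all_reals all_analysis.
From mathcomp Require Import measurable_realfun.
(* Give the [dyadic_itv] of Defs precedence over the one of mathcomp-analysis. *)
Import Pilot.Defs.
Set Implicit Arguments. Unset Strict Implicit. Unset Printing Implicit Defensive.
Import Order.TTheory GRing.Theory Num.Theory.
Import numFieldNormedType.Exports.
Local Open Scope classical_set_scope.
Local Open Scope ring_scope.

(* Substituting x_+ = g + h and x_- = g - h, uniform q-convexity of T is the
   two-point inequality
     |g|^q + c^-q |T h|^q <= (|g + h|^q + |g - h|^q) / 2.
   For a dyadic martingale, S_m = d_0 + ... + d_m is constant, say g, on each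
   level-m atom, and d_(m+1) takes opposite values h and -h on its two halves.
   Averaging the two-point inequality over the atoms therefore gives
     E|S_m|^q + c^-q E|T d_(m+1)|^q <= E|S_(m+1)|^q,
   and telescoping yields strong martingale cotype. Conversely, the cotype
   inequality for the one-step martingale g, ±h is the two-point inequality.
   All functions involved are dyadic step functions, so every integral is a
   finite average over dyadic points. *)

Section DyadicStepFunctions.
Context {R : realType}.

Definition dyadic_pt (n i : nat) : R := i%:R / 2 ^+ n.

Lemma exp2_gt0 n : 0 < (2 : R) ^+ n.
Proof. by rewrite exprn_gt0. Qed.

Lemma ler_dyadic_pt n i j : (dyadic_pt n i <= dyadic_pt n j) = (i <= j)%N.
Proof. by rewrite ler_pM2r ?invr_gt0 ?exp2_gt0 // ler_nat. Qed.

Lemma ltr_dyadic_pt n i j : (dyadic_pt n i < dyadic_pt n j) = (i < j)%N.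
Proof. by rewrite ltr_pM2r ?invr_gt0 ?exp2_gt0 // ltr_nat. Qed.

Lemma dyadic_itv_pt n i : dyadic_itv n i (dyadic_pt n i).
Proof. by apply/andP; rewrite lexx ltr_dyadic_pt. Qed.

Lemma dyadic_itv_sub_unit n i : (i < 2 ^ n)%N -> dyadic_itv n i `<=` @unit_itv R.
Proof.
move=> lt_i t /andP[le_it lt_ti]; apply/andP; split.
  by apply: le_trans le_it; rewrite divr_ge0 ?ler0n ?ltW ?exp2_gt0.
apply: (lt_le_trans lt_ti); rewrite ler_pdivrMr ?exp2_gt0 // mul1r.
by rewrite -natrX ler_nat.
Qed.

Lemma dyadic_itv_cover n t :
  @unit_itv R t -> exists2 i, (i < 2 ^ n)%N & @dyadic_itv R n i t.
Proof.
move=> /andP[t_ge0 t_lt1].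
have t2n_ge0 : 0 <= t * 2 ^+ n by rewrite mulr_ge0 // ltW ?exp2_gt0.
exists (Num.truncn (t * 2 ^+ n)).
  by rewrite truncn_lt_nat // natrX -[X in _ < X]mul1r ltr_pM2r ?exp2_gt0.
have /andP[trunc_le lt_trunc] := truncn_itv t2n_ge0.
apply/andP; split; first by rewrite ler_pdivrMr ?exp2_gt0.
by rewrite ltr_pdivlMr ?exp2_gt0.
Qed.

Lemma dyadic_itv_uniq n i j (t : R) :
  dyadic_itv n i t -> dyadic_itv n j t -> i = j.
Proof.
change (dyadic_pt n i <= t < dyadic_pt n i.+1 ->
        dyadic_pt n j <= t < dyadic_pt n j.+1 -> i = j).
move=> /andP[le_it lt_ti] /andP[le_jt lt_tj]; apply/eqP.
by rewrite eqn_leq -ltnS -(ltr_dyadic_pt n) (le_lt_trans le_it lt_tj) -ltnS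
  -(ltr_dyadic_pt n) (le_lt_trans le_jt lt_ti).
Qed.

Lemma dyadic_ptS n i : dyadic_pt n i = dyadic_pt n.+1 i.*2.
Proof.
by rewrite /dyadic_pt -mul2n natrM exprS invfM mulrACA mulfV ?mul1r // pnatr_eq0.
Qed.

Lemma dyadic_itv_half n i : @dyadic_itv R n.+1 i `<=` dyadic_itv n i./2.
Proof.
move=> t; change (dyadic_pt n.+1 i <= t < dyadic_pt n.+1 i.+1 ->
                  dyadic_pt n i./2 <= t < dyadic_pt n i./2.+1).
rewrite !(dyadic_ptS n) => /andP[le_it lt_ti]; apply/andP; split.
  by apply: le_trans le_it; rewrite ler_dyadic_pt -{2}(odd_double_half i) leq_addl.
apply: lt_le_trans lt_ti _.
by rewrite ler_dyadic_pt doubleS -{1}(odd_double_half i); case: odd.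
Qed.

Lemma dyadic_measurable_mono (V : Type) k m (f : R -> V) :
  (k <= m)%N -> dyadic_measurable k f -> dyadic_measurable m f.
Proof.
move=> le_km f_k; elim: m le_km => [|m IHm]; first by rewrite leqn0 => /eqP <-.
rewrite leq_eqVlt => /orP[/eqP <- //|]; rewrite ltnS => /IHm f_m.
move=> i lt_i s t si ti; apply: f_m (dyadic_itv_half si) (dyadic_itv_half ti).
by rewrite -divn2 ltn_divLR // -expnSr.
Qed.

Lemma dyadic_measurable_comp (V W : Type) n (f : R -> V) (h : V -> W) :
  dyadic_measurable n f -> dyadic_measurable n (h \o f).
Proof. by move=> f_n i lt_i s t si ti /=; rewrite (f_n i lt_i s t). Qed.

Lemma dyadic_itvE n i :
  dyadic_itv n i = [set` `[dyadic_pt n i, dyadic_pt n i.+1[%R].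
Proof. by apply/seteqP; split => x; rewrite /= in_itv. Qed.

Lemma measurable_dyadic_itv n i : measurable (@dyadic_itv R n i).
Proof. by rewrite dyadic_itvE; exact: measurable_itv. Qed.

Lemma lebesgue_measure_dyadic_itv n i :
  lebesgue_measure (@dyadic_itv R n i) = ((2 ^+ n)^-1)%:E.
Proof.
rewrite dyadic_itvE lebesgue_measure_itv /= lte_fin.
have /andP[_ ->] := dyadic_itv_pt n i.
by rewrite -EFinD /dyadic_pt -mulrBl -natrB // subSnn mul1r.
Qed.

Lemma unit_itv_dyadic n :
  @unit_itv R = \big[setU/set0]_(i <- iota 0 (2 ^ n)) dyadic_itv n i.
Proof.
rewrite -bigcup_seq; apply/seteqP; split => t.
  by move=> /(dyadic_itv_cover n) [i lt_i ti]; exists i; rewrite //= mem_iota.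
by move=> [i /=]; rewrite mem_iota => /andP[_ lt_i]; exact: dyadic_itv_sub_unit.
Qed.

Lemma measurable_fun_dyadic_step n (g : R -> R) (s : seq nat) :
  dyadic_measurable n g -> {subset s <= gtn (2 ^ n)%N} ->
  measurable_fun (\big[setU/set0]_(i <- s) dyadic_itv n i) (EFin \o g).
Proof.
move=> g_n; elim: s => [|a s IHs] s_lt; first by rewrite big_nil; exact: measurable_fun_set0.
rewrite big_cons; apply/measurable_funU; [exact: measurable_dyadic_itv| |split].
- by apply: bigsetU_measurable => i _; exact: measurable_dyadic_itv.
- apply: (eq_measurable_fun (cst (g (dyadic_pt n a))%:E)); last exact: measurable_cst.
  move=> t; rewrite inE => ta /=; congr EFin; apply: (g_n a) => //.
    exact/s_lt/mem_head.
  exact: dyadic_itv_pt.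
- by apply: IHs => i si; apply: s_lt; rewrite in_cons si orbT.
Qed.

Definition dyadic_mean (n : nat) (a : nat -> R) : R :=
  (\sum_(0 <= i < 2 ^ n) a i) / 2 ^+ n.

Lemma integral_dyadic_step n (g : R -> R) : dyadic_measurable n g ->
  (\int[lebesgue_measure]_(t in @unit_itv R) (g t)%:E =
   (dyadic_mean n (g \o dyadic_pt n))%:E)%E.
Proof.
move=> g_n; have lt_iota i : i \in iota 0 (2 ^ n) -> (i < 2 ^ n)%N.
  by rewrite mem_iota => /andP[].
rewrite (unit_itv_dyadic n) integral_bigsetU_EFin //.
- rewrite /dyadic_mean mulr_suml -sumEFin /index_iota subn0.
  apply: eq_big_seq => i /lt_iota lt_i.
  rewrite (eq_integral (fun=> (g (dyadic_pt n i))%:E)); last first.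
    move=> t; rewrite inE => ti; congr EFin.
    by apply: (g_n i) => //; exact: dyadic_itv_pt.
  rewrite integral_cst; last exact: measurable_dyadic_itv.
  by rewrite EFinM; congr (_ * _)%E; exact: lebesgue_measure_dyadic_itv.
- exact: measurable_dyadic_itv.
- exact: iota_uniq.
- by move=> i j _ _ [t [ti tj]]; exact: dyadic_itv_uniq ti tj.
- exact: measurable_fun_dyadic_step.
Qed.

Lemma dyadic_mean0 a : dyadic_mean 0 a = a 0%N.
Proof. by rewrite /dyadic_mean expn0 expr0 divr1 big_nat1. Qed.

Lemma dyadic_meanS n a :
  dyadic_mean n.+1 a = dyadic_mean n (fun j => (a j.*2 + a j.*2.+1) / 2).
Proof.
have pair_sum N : \sum_(0 <= i < N.*2) a i = \sum_(0 <= j < N) (a j.*2 + a j.*2.+1).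
  elim: N => [|N IHN]; first by rewrite !big_geq.
  by rewrite doubleS !big_nat_recr //= IHN addrA.
rewrite /dyadic_mean expnS mul2n pair_sum -mulr_suml exprS invfM mulrA.
by rewrite [_ / 2 / _]mulrAC.
Qed.

Lemma dyadic_meanDZ n a b k :
  dyadic_mean n a + k * dyadic_mean n b = dyadic_mean n (fun i => a i + k * b i).
Proof. by rewrite /dyadic_mean big_split /= -mulr_sumr mulrA mulrDl. Qed.

Lemma ler_dyadic_mean n a b :
  (forall i, (i < 2 ^ n)%N -> a i <= b i) -> dyadic_mean n a <= dyadic_mean n b.
Proof.
move=> le_ab; apply: ler_wpM2r; first by rewrite invr_ge0 ltW ?exp2_gt0.
by apply: ler_sum_nat => i /andP[_]; exact: le_ab.
Qed.

Lemma dyadic_mean_ge0 n a : (forall i, 0 <= a i) -> 0 <= dyadic_mean n a.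
Proof.
move=> a_ge0; apply: divr_ge0; last exact/ltW/exp2_gt0.
by apply: sumr_ge0 => i _.
Qed.

Definition dyadic_moment (V : normedModType R) (q : R) n (f : R -> V) : R :=
  dyadic_mean n (fun i => `|f (dyadic_pt n i)| `^ q).

Lemma dyadic_moment_ge0 (V : normedModType R) q n (f : R -> V) :
  0 <= dyadic_moment q n f.
Proof. by apply: dyadic_mean_ge0 => i; exact: powR_ge0. Qed.

Lemma Lq_norm_dyadic (V : normedModType R) q n (f : R -> V) :
  dyadic_measurable n f -> Lq_norm q f = dyadic_moment q n f `^ q^-1.
Proof.
move=> f_n; rewrite /Lq_norm (@integral_dyadic_step n (fun t => `|f t| `^ q)) //.
exact: (dyadic_measurable_comp (fun v => `|v| `^ q)).
Qed.

End DyadicStepFunctions.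

Section PowerInequalities.
Context {R : realType}.
Implicit Types a b c q : R.

Lemma powR_invK a q : 0 <= a -> 0 < q -> (a `^ q^-1) `^ q = a.
Proof. by move=> a_ge0 q_gt0; rewrite -powRrM mulVf ?gt_eqF ?powRr1. Qed.

Lemma powRK a q : 0 <= a -> 0 < q -> (a `^ q) `^ q^-1 = a.
Proof. by move=> a_ge0 q_gt0; rewrite -powRrM mulfV ?gt_eqF ?powRr1. Qed.

Lemma ler_powRV q a b : 0 < q -> 0 <= a -> 0 <= b ->
  (a `^ q^-1 <= b `^ q^-1) = (a <= b).
Proof.
move=> q_gt0 a_ge0 b_ge0; apply/idP/idP => [le_ab|].
  rewrite -(powR_invK a_ge0 q_gt0) -(powR_invK b_ge0 q_gt0).
  by apply: (ge0_ler_powR (ltW q_gt0)); rewrite ?nnegrE ?powR_ge0.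
have qV_ge0 : 0 <= q^-1 by rewrite invr_ge0 ltW.
exact: (ge0_ler_powR qV_ge0).
Qed.

Lemma ler_pM_powRV q a c D : 0 < q -> 0 < c -> 0 <= a -> 0 <= D ->
  (a <= c * D `^ q^-1) = (c `^ (- q) * a `^ q <= D).
Proof.
move=> q_gt0 c_gt0 a_ge0 D_ge0.
rewrite -{1}(powRK a_ge0 q_gt0) -[c in c * _](powRK (ltW c_gt0) q_gt0).
rewrite -powRM ?powR_ge0 // ler_powRV ?mulr_ge0 ?powR_ge0 //.
by rewrite powRN ler_pdivrMl ?powR_gt0.
Qed.

Lemma powR_midpoint_le q a b : 1 <= q -> 0 <= a -> 0 <= b ->
  ((a + b) / 2) `^ q <= (a `^ q + b `^ q) / 2.
Proof.
move=> q_ge1 a_ge0 b_ge0.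
have half_ge0 : 0 <= 2^-1 :> R by rewrite invr_ge0.
have half_le1 : 2^-1 <= 1 :> R by rewrite invf_le1 ?ler1n.
have onem_half : unstable.onem 2^-1 = 2^-1 :> R.
  by rewrite /unstable.onem {1}(splitr 1) mul1r addrK.
have := convex_powR q_ge1 (Itv01 half_ge0 half_le1) (x := a) (y := b).
rewrite !inE /= !in_itv /= !andbT => /(_ a_ge0 b_ge0).
rewrite !convRE /= [X in X `^ q <= _ -> _]convRE /= onem_half.
by rewrite -!mulrDr !(mulrC 2^-1).
Qed.

Lemma powR_norm_le_mean (V : normedModType R) q (g h : V) : 1 <= q ->
  `|g| `^ q <= (`|g + h| `^ q + `|g - h| `^ q) / 2.
Proof.
move=> q_ge1; apply: le_trans (powR_midpoint_le q_ge1 (normr_ge0 _) (normr_ge0 _)).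
apply: ge0_ler_powR; rewrite ?nnegrE ?(le_trans _ q_ge1) ?divr_ge0 ?addr_ge0 //.
rewrite ler_pdivlMr // mulr_natr -normrMn.
have <- : g + h + (g - h) = g *+ 2 by rewrite addrACA subrr addr0 mulr2n.
exact: ler_normD.
Qed.

End PowerInequalities.

Section TwoPointInequality.
Context {R : realType} {X Y : normedModType R}.
Variables (T : {linear X -> Y}) (q c : R).

Definition two_point_ineq :=
  forall g h : X, `|g| `^ q + c `^ (- q) * `|T h| `^ q
                    <= (`|g + h| `^ q + `|g - h| `^ q) / 2.

Lemma scale_half_addD (V : lmodType R) (g h : V) : 2^-1 *: (g + h + (g - h)) = g.
Proof.
by rewrite addrACA subrr addr0 -mulr2n -[g *+ 2]scaler_nat scalerA mulVf ?scale1r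
  ?pnatr_eq0.
Qed.

Lemma scale_half_addB (V : lmodType R) (g h : V) : 2^-1 *: (g + h - (g - h)) = h.
Proof. by rewrite -[RHS](scale_half_addD h g) opprB (addrC g h). Qed.

Lemma uniformly_q_convexP : 1 <= q -> 0 < c ->
  uniformly_q_convex T q c <-> two_point_ineq.
Proof.
move=> q_ge1 c_gt0; have q_gt0 : 0 < q by apply: lt_le_trans q_ge1.
suff at_add_sub g h :
  (`|2^-1 *: (T (g + h) - T (g - h))| <=
    c * ((`|g + h| `^ q + `|g - h| `^ q) / 2 - `|2^-1 *: (g + h + (g - h))| `^ q) `^ q^-1)
  <-> `|g| `^ q + c `^ (- q) * `|T h| `^ q <= (`|g + h| `^ q + `|g - h| `^ q) / 2.
  split=> [convT g h | two_pt xp xm]; first exact/at_add_sub/convT.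
  have [g [h [-> ->]]] : exists g h, xp = g + h /\ xm = g - h.
    exists (2^-1 *: (xp + xm)), (2^-1 *: (xp - xm)).
    by rewrite -scalerDr -scalerBr scale_half_addD scale_half_addB.
  exact/at_add_sub/two_pt.
rewrite -linearB -linearZ /= scale_half_addD scale_half_addB -lerBrDl.
have D_ge0 : 0 <= (`|g + h| `^ q + `|g - h| `^ q) / 2 - `|g| `^ q.
  by rewrite subr_ge0 powR_norm_le_mean.
by rewrite ler_pM_powRV.
Qed.

End TwoPointInequality.

Lemma dyadic_measurable_partial_sum (R : realType) (V : normedModType R) n m
    (d : nat -> R -> V) :
  dyadic_mart_diff n d -> (m <= n)%N ->
  dyadic_measurable m (fun t => \sum_(0 <= k < m.+1) d k t).
Proof.
move=> [d_meas _] le_mn i lt_i s t si ti; apply: eq_big_nat => k /andP[_ lt_km].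
have le_km : (k <= m)%N by rewrite -ltnS.
exact: (dyadic_measurable_mono le_km (d_meas k (leq_trans le_km le_mn))) si ti.
Qed.

Section DyadicMartingales.
Context {R : realType} {X Y : normedModType R}.
Variables (T : {linear X -> Y}) (q c : R).
Hypothesis q_gt0 : 0 < q.

Lemma two_point_dyadic_step m (s d : R -> X) : two_point_ineq T q c ->
  dyadic_measurable m s -> dyadic_measurable m.+1 d -> cond_exp_zero m.+1 d ->
  dyadic_moment q m s + c `^ (- q) * dyadic_moment q m.+1 (T \o d)
    <= dyadic_moment q m.+1 (fun t => s t + d t).
Proof.
move=> two_pt s_m d_m d_mean0.
rewrite /dyadic_moment !dyadic_meanS dyadic_meanDZ; apply: ler_dyadic_mean => j lt_j.
have s_odd : s (dyadic_pt m.+1 j.*2.+1) = s (dyadic_pt m j).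
  apply: (s_m j lt_j) (dyadic_itv_pt _ _).
  by have := dyadic_itv_half (dyadic_itv_pt m.+1 j.*2.+1); rewrite /= uphalf_double.
have d_odd : d (dyadic_pt m.+1 j.*2.+1) = - d (dyadic_pt m.+1 j.*2).
  apply/eqP; rewrite -addr_eq0 addrC; apply/eqP.
  exact: (d_mean0 j lt_j) (dyadic_itv_pt _ _) (dyadic_itv_pt _ _).
rewrite /= s_odd d_odd -(dyadic_ptS m j) linearN normrN mulrDl -splitr.
exact: two_pt.
Qed.

Lemma strong_martingale_cotype_of_two_point :
  two_point_ineq T q c -> strong_martingale_cotype T q c.
Proof.
move=> two_pt n x d d_mart d0_x; have [d_meas d_mean0] := d_mart.
pose S m t := \sum_(0 <= k < m.+1) d k t.
have moment_S m : (m <= n)%N ->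
    `|x| `^ q + c `^ (- q) * \sum_(1 <= k < m.+1) dyadic_moment q k (T \o d k)
      <= dyadic_moment q m (S m).
  elim: m => [_|m IHm lt_mn].
    rewrite big_geq // mulr0 addr0 /dyadic_moment dyadic_mean0 /S big_nat1 d0_x //.
    exact: (@dyadic_itv_sub_unit _ 0 0) (dyadic_itv_pt 0 0).
  rewrite big_nat_recr //= mulrDr addrA.
  apply: le_trans (lerD (IHm (ltnW lt_mn)) (lexx _)) _.
  have -> : S m.+1 = fun t => S m t + d m.+1 t.
    by apply/funext => t; rewrite /S big_nat_recr.
  apply: two_point_dyadic_step => //; last by apply: d_mean0; rewrite lt_mn.
  - exact: dyadic_measurable_partial_sum d_mart (ltnW lt_mn).
  - exact: d_meas.
have Lq_T k : (1 <= k < n.+1)%N ->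
    Lq_norm q (T \o d k) `^ q = dyadic_moment q k (T \o d k).
  move=> /andP[_ le_kn].
  rewrite (Lq_norm_dyadic q (dyadic_measurable_comp T (d_meas k le_kn))).
  by rewrite powR_invK ?dyadic_moment_ge0.
rewrite (eq_big_nat _ _ Lq_T).
rewrite (Lq_norm_dyadic q (dyadic_measurable_partial_sum d_mart (leqnn n))).
rewrite ler_powRV ?dyadic_moment_ge0 //; first exact: moment_S.
rewrite addr_ge0 ?powR_ge0 // mulr_ge0 ?powR_ge0 //.
by apply: sumr_ge0 => k _; exact: dyadic_moment_ge0.
Qed.

Lemma two_point_of_strong_martingale_cotype :
  strong_martingale_cotype T q c -> two_point_ineq T q c.
Proof.
move=> cotypeT g h.
pose d k (t : R) : X :=
  if k == 0%N then g else if k == 1%N then (if t < 2^-1 then h else - h) else 0.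
have left_half (s : R) : dyadic_itv 1 0 s -> s < 2^-1.
  by move=> /andP[_]; rewrite expr1 mul1r.
have right_half (s : R) : dyadic_itv 1 1 s -> ~~ (s < 2^-1).
  by move=> /andP[+ _]; rewrite expr1 mul1r -leNgt.
have d1_meas : dyadic_measurable 1 (d 1%N).
  move=> [|[|//]] _ s t si ti; rewrite /d /=.
    by rewrite (left_half _ si) (left_half _ ti).
  by rewrite (negbTE (right_half _ si)) (negbTE (right_half _ ti)).
have d_mart : dyadic_mart_diff 1 d.
  split; first by move=> [|[|//]] _ //= i lt_i s t si ti; exact: d1_meas si ti.
  move=> [//|[|//]] _ [|//] _ s t si ti; rewrite /d /=.
  by rewrite (left_half _ si) (negbTE (right_half _ ti)) subrr.
have := cotypeT 1%N g d d_mart (fun _ _ => erefl).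
rewrite big_nat1 (Lq_norm_dyadic q (dyadic_measurable_comp T d1_meas)).
rewrite (Lq_norm_dyadic q (dyadic_measurable_partial_sum d_mart (leqnn 1))).
rewrite powR_invK ?dyadic_moment_ge0 // ler_powRV ?dyadic_moment_ge0 //; last first.
  by rewrite addr_ge0 ?powR_ge0 // mulr_ge0 ?powR_ge0 ?dyadic_moment_ge0.
have pt10 : dyadic_pt 1 0 = 0 :> R by rewrite /dyadic_pt mul0r.
have pt11 : dyadic_pt 1 1 = 2^-1 :> R by rewrite /dyadic_pt expr1 mul1r.
have sum2 t : \sum_(0 <= k < 2) d k t = d 0%N t + d 1%N t.
  by rewrite big_nat_recr //= big_nat1.
rewrite /dyadic_moment !dyadic_meanS !dyadic_mean0 /= !sum2 pt10 pt11.
by rewrite /d /= invr_gt0 ltr0n ltxx /= linearN normrN mulrDl -splitr.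
Qed.

End DyadicMartingales.

Theorem theorem1 (R : realType) (X Y : completeNormedModType R)
  (T : {linear X -> Y}) (hT : continuous T) (q c : R)
  (hq : 2 <= q) (hc : 0 < c) :
  uniformly_q_convex T q c <-> strong_martingale_cotype T q c.
Proof.
have q_ge1 : 1 <= q by apply: le_trans hq; rewrite ler1n.
have q_gt0 : 0 < q by apply: lt_le_trans q_ge1.
rewrite uniformly_q_convexP //; split.
- exact: strong_martingale_cotype_of_two_point.
- exact: two_point_of_strong_martingale_cotype.
Qed.
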